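(* Let $k$ be a field, $(C,\Delta)$ a coassociative coalgebra, $(L,\phi)$ a Lie algebra and $B$ a Lie module over $L$ via $\psi:L\otimes B\to B$. Let $n\ge 0$ and $f\in Alt^n(L,B)$, with induced map $F$. Then $\delta F$ (defined below) equals the map $Hom(C,L)^{\otimes(n+1)}\to Hom(C,B)$ induced by $df\in Alt^{n+1}(L,B)$; in particular $\delta F$ is TD skew symmetric, so $\delta$ maps $TDalt^n(Hom(C,L),Hom(C,B))$ into $TDalt^{n+1}(Hom(C,L),Hom(C,B))$.
   Context: Iterated coproduct $\Delta^{(m-1)}:C\to C^{\otimes m}$ ($\Delta^{(0)}=\mathrm{id}$, $\Delta^{(m-1)}=(\Delta\otimes1\otimes\dots\otimes1)\circ\Delta^{(m-2)}$), written $\sum c_{(1)}\otimes\dots\otimes c_{(m)}$. $S_m$ acts on $m$-fold tensor products by $\sigma(x_1\otimes\dots\otimes x_m)=x_{\sigma(1)}\otimes\dots\otimes x_{\sigma(m)}$. For $\chi:X_1\otimes\dots\otimes X_m\to Y$, the induced map sends $f_1\otimes\dots\otimes f_m$ ($f_j\in Hom(C,X_j)$) to $\chi\circ(f_1\otimes\dots\otimes f_m)\circ\Delta^{(m-1)}$. A map $G:Hom(C,L)^{\otimes m}\to Hom(C,B)$ induced by $\chi$ is TD skew if $G\circ\sigma=(-1)^\sigma G^{\sigma^{-1}}$ for all $\sigma\in S_m$, where $G^\sigma(f_1\otimes\dots\otimes f_m)=\chi\circ(f_1\otimes\dots\otimes f_m)\circ\sigma\circ\Delta^{(m-1)}$.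 $Alt^n(L,B)$ is the space of skew symmetric linear maps $L^{\otimes n}\to B$, with $Alt^0(L,B)=B$; the Chevalley–Eilenberg differential is $df(x_1,\dots,x_{n+1})=\sum_{i=1}^{n+1}(-1)^{i+1}\psi(x_i,f(x_1,\dots,\hat{x_i},\dots,x_{n+1}))+\sum_{j<k}(-1)^{j+k}f(\phi(x_j,x_k),x_1,\dots,\hat{x_j},\dots,\hat{x_k},\dots,x_{n+1})$. $TDalt^n(Hom(C,L),Hom(C,B))$ is the space of TD skew maps $Hom(C,L)^{\otimes n}\to Hom(C,B)$ (for $n=0$ identified with $B$). Let $\Phi,\Psi$ be the maps induced by $\phi,\psi$ and $F$ the map induced by $f$. For $\sigma\in S_{n+1}$ define $(\Psi\circ(1\otimes F))^{\sigma}(g_1\otimes\dots\otimes g_{n+1})(c)=\sum\psi\big(g_1(c_{(\sigma(1))}),f(g_2(c_{(\sigma(2))})\otimes\dots\otimes g_{n+1}(c_{(\sigma(n+1))}))\big)$ and, for $n\ge1$, $(F\circ(\Phi\otimes1))^{\sigma}(g_1\otimes\dots\otimes g_{n+1})(c)=\sum f\big(\phi(g_1(c_{(\sigma(1))}),g_2(c_{(\sigma(2))}))\otimes g_3(c_{(\sigma(3))})\otimes\dots\otimes g_{n+1}(c_{(\sigma(n+1))})\big)$. A $(p,q)$-unshuffle is $\sigma\in S_{p+q}$ with $\sigma(1)<\dots<\sigma(p)$ and $\sigma(p+1)<\dots<\sigma(p+q)$. Define $$\delta F=\sum_{\sigma}(-1)^{\sigma}(\Psi\circ(1\otimes F))^{\sigma}\circ\sigma-\sum_{\sigma'}(-1)^{\sigma'}(F\circ(\Phi\otimes1))^{\sigma'}\circ\sigma',$$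 $\sigma$ over $(1,n)$-unshuffles, $\sigma'$ over $(2,n-1)$-unshuffles (the second sum is empty for $n=0$), and $\sigma$ acting on $Hom(C,L)^{\otimes(n+1)}$ by permuting factors. For $n=0$ this reads $(\delta F)(g)(c)=\psi(g(c),f)$. *)

From HB Require Import structures.
From mathcomp Require Import all_boot all_order all_algebra.
From mathcomp Require Import fingroup perm.
Set Implicit Arguments. Unset Strict Implicit. Unset Printing Implicit Defensive.
Import GRing.Theory.
Local Open Scope ring_scope.

(* Conventions: multilinear maps on L^{(x) m} are modelled as functions
   [seq L -> B] used on sequences of size m; a coproduct C -> C (x) C is
   modelled (Sweedler-style) by a function returning a finite list of pairs
   (a,b) standing for  sum a (x) b ; equality of tensors is tested against
   all multilinear forms. *)

Section Defs.
Variable k : fieldType.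

Section Coalg.
Variable C : lmodType k.
Variable cop : C -> seq (C * C).

Definition bilinear_form (beta : C -> C -> k) :=
  (forall a x y z, beta (a *: x + y) z = a * beta x z + beta y z) /\
  (forall a x y z, beta z (a *: x + y) = a * beta z x + beta z y).

Definition trilinear_form (beta : C -> C -> C -> k) :=
  (forall a x y z w, beta (a *: x + y) z w = a * beta x z w + beta y z w) /\
  (forall a x y z w, beta z (a *: x + y) w = a * beta z x w + beta z y w) /\
  (forall a x y z w, beta z w (a *: x + y) = a * beta z w x + beta z w y).

Definition cop_linear := forall beta, bilinear_form beta ->
  forall a x y,
    \sum_(p <- cop (a *: x + y)) beta p.1 p.2 =
    a * \sum_(p <- cop x) beta p.1 p.2 + \sum_(p <- cop y) beta p.1 p.2.

(* (Delta (x) 1) Delta = (1 (x) Delta) Delta in C (x) C (x) C *)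
Definition coassociative := forall beta, trilinear_form beta -> forall c,
  \sum_(p <- cop c) \sum_(q <- cop p.1) beta q.1 q.2 p.2 =
  \sum_(p <- cop c) \sum_(q <- cop p.2) beta p.1 q.1 q.2.

Definition coalgebra := cop_linear /\ coassociative.

(* iter_cop m c represents Delta^{(m)} c in C^{(x)(m+1)}, with
   Delta^{(0)} = id, Delta^{(m)} = (Delta (x) 1 (x) ... (x) 1) o Delta^{(m-1)} *)
Fixpoint iter_cop (m : nat) (c : C) : seq (seq C) :=
  if m is m'.+1 then
    flatten [seq [seq p.1 :: p.2 :: behead t | p <- cop (head 0 t)]
            | t <- iter_cop m' c]
  else [:: [:: c]].
End Coalg.

Section Lie.
Variables (L B : lmodType k).
Variable phi : L -> L -> L.
Variable psi : L -> B -> B.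

Definition lie_algebra :=
  (forall a x y z, phi (a *: x + y) z = a *: phi x z + phi y z) /\
  (forall a x y z, phi z (a *: x + y) = a *: phi z x + phi z y) /\
  (forall x, phi x x = 0) /\
  (forall x y z, phi x (phi y z) + phi y (phi z x) + phi z (phi x y) = 0).

Definition lie_module :=
  (forall a x y b, psi (a *: x + y) b = a *: psi x b + psi y b) /\
  (forall a x b b', psi x (a *: b + b') = a *: psi x b + psi x b') /\
  (forall x y b, psi (phi x y) b = psi x (psi y b) - psi y (psi x b)).

Definition multilinear (n : nat) (f : seq L -> B) :=
  forall s, size s = n -> forall i, (i < n)%N -> forall a x y,
    f (set_nth 0 s i (a *: x + y)) =
    a *: f (set_nth 0 s i x) + f (set_nth 0 s i y).

Definition skew (n : nat) (f : seq L -> B) :=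
  forall s, size s = n -> forall sigma : 'S_n,
    f [seq nth 0 s (sigma i) | i <- enum 'I_n] = (-1) ^+ sigma *: f s.

(* Alt^n(L,B); for n = 0, f [::] is the element of B *)
Definition Alt (n : nat) (f : seq L -> B) := multilinear n f /\ skew n f.

Definition rem_at (T : Type) (i : nat) (s : seq T) := take i s ++ drop i.+1 s.

(* Chevalley-Eilenberg differential, indices 0-based *)
Definition CE_d (f : seq L -> B) (s : seq L) : B :=
  \sum_(i < size s) (-1) ^+ i *: psi (nth 0 s i) (f (rem_at i s)) +
  \sum_(j < size s) \sum_(l < size s | (j < l)%N)
     (-1) ^+ (j + l) *: f (phi (nth 0 s j) (nth 0 s l) :: rem_at j (rem_at l s)).

Variable C : lmodType k.
Variable cop : C -> seq (C * C).

(* value at g_1 (x) ... (x) g_m (a pure tensor; these span) and at c *)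
Definition induced (m : nat) (chi : seq L -> B)
    (g : 'I_m -> {linear C -> L}) (c : C) : B :=
  \sum_(t <- iter_cop cop m.-1 c) chi [seq g i (nth 0 t i) | i <- enum 'I_m].

Definition twisted (m : nat) (chi : seq L -> B) (tau : 'S_m)
    (g : 'I_m -> {linear C -> L}) (c : C) : B :=
  \sum_(t <- iter_cop cop m.-1 c)
     chi [seq g i (nth 0 t (tau i)) | i <- enum 'I_m].

Definition induced_by (m : nat) (chi : seq L -> B)
    (G : ('I_m -> {linear C -> L}) -> C -> B) :=
  forall g c, G g c = induced chi g c.

Definition TD_skew (m : nat) (chi : seq L -> B)
    (G : ('I_m -> {linear C -> L}) -> C -> B) :=
  induced_by chi G /\
  forall (sigma : 'S_m) g c,
    G (fun i => g (sigma i)) c = (-1) ^+ sigma *: twisted chi sigma^-1 g c.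

Definition unshuffle (m p : nat) (sigma : 'S_m) : bool :=
  (p <= m)%N &&
  [forall i : 'I_m, forall j : 'I_m,
     ((i < j)%N && ((j < p)%N || (p <= i)%N)) ==> (sigma i < sigma j)%N].

Definition permuted_vals (m : nat) (sigma : 'S_m)
    (g : 'I_m -> {linear C -> L}) (t : seq C) : seq L :=
  [seq g (sigma i) (nth 0 t (sigma i)) | i <- enum 'I_m].

Definition deltaF (m : nat) (f : seq L -> B)
    (g : 'I_m -> {linear C -> L}) (c : C) : B :=
  \sum_(sigma : 'S_m | unshuffle 1 sigma) (-1) ^+ sigma *:
     \sum_(t <- iter_cop cop m.-1 c)
        (let xs := permuted_vals sigma g t in
         psi (nth 0 xs 0) (f (drop 1 xs)))
  - \sum_(sigma : 'S_m | unshuffle 2 sigma) (-1) ^+ sigma *: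
     \sum_(t <- iter_cop cop m.-1 c)
        (let xs := permuted_vals sigma g t in
         f (phi (nth 0 xs 0) (nth 0 xs 1) :: drop 2 xs)).
End Lie.
End Defs.

From Pilot Require Import Defs.
From HB Require Import structures.
From mathcomp Require Import all_boot all_order all_algebra.
From mathcomp Require Import fingroup perm zify.
Set Implicit Arguments. Unset Strict Implicit. Unset Printing Implicit Defensive.
Import GRing.Theory.
Local Open Scope ring_scope.

(* Fix a term of the iterated coproduct and put x = (g_1(c_(1)), ..., g_(n+1)(c_(n+1))).
   Writing a permutation as sigma = lift_perm 0 (sigma 0) tau identifies S_(n+1) with
   {0..n} x S_n; a (1,n)-unshuffle is then determined by sigma(0) and a (2,n-1)-unshuffle
   by the pair sigma(0) < sigma(1), so the two sums defining delta F match the two sums of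
   the Chevalley-Eilenberg differential df(x) term by term.  For an arbitrary sigma, skew
   symmetry of f (and antisymmetry of phi) shows that the sigma-term only depends on
   sigma(0), resp. on the set {sigma(0), sigma(1)}; hence permuting x by pi permutes the
   terms of df(x) up to the sign (-1)^pi, i.e. df is skew symmetric, and TD skewness of
   delta F follows because G o sigma and G^(sigma^-1) evaluate df on sequences that differ
   by sigma. *)

Section RemAt.
Variables (T : Type) (x0 : T).
Implicit Types s : seq T.

Lemma nth_rem_at i s k : nth x0 (rem_at i s) k = nth x0 s (bump i k).
Proof.
rewrite /rem_at /bump; case: (ltnP i (size s)) => [lt_is|le_si].
  rewrite nth_cat size_take lt_is; case: ltnP => [lt_ki|le_ik].
    by rewrite nth_take.
  by rewrite nth_drop; congr nth; lia.
rewrite take_oversize // drop_oversize ?cats0; last lia.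
by case: leqP => // le_ik; rewrite !nth_default //; lia.
Qed.

Lemma rem_at0 s : rem_at 0 s = behead s.
Proof. by case: s => [|x s]; rewrite /rem_at /= ?drop0. Qed.

Lemma size_rem_at i s : (i < size s)%N -> size (rem_at i s) = (size s).-1.
Proof. by move=> lt_is; rewrite size_cat size_take size_drop lt_is; lia. Qed.

Lemma rem_at_set_nth i p s v : (i < size s)%N -> (p < size s)%N -> i != p ->
  rem_at i (set_nth x0 s p v) = set_nth x0 (rem_at i s) (unbump i p) v.
Proof.
move=> lt_is lt_ps neq_ip; apply: (@eq_from_nth _ x0) => [|k _].
  rewrite size_set_nth !size_rem_at ?size_set_nth ?(maxn_idPr lt_ps) //.
  by apply/esym/maxn_idPr; rewrite /unbump; lia.
rewrite !(nth_rem_at, nth_set_nth) /= nth_rem_at.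
suff -> : (bump i k == p) = (k == unbump i p) by [].
by apply/eqP/eqP => [<-|->]; rewrite ?bumpK ?unbumpK // inE eq_sym.
Qed.

Lemma rem_at_set_nth_id p s v : (p < size s)%N ->
  rem_at p (set_nth x0 s p v) = rem_at p s.
Proof.
move=> lt_ps; apply: (@eq_from_nth _ x0) => [|k _].
  by rewrite !size_rem_at ?size_set_nth ?(maxn_idPr lt_ps).
by rewrite !nth_rem_at nth_set_nth /= eq_sym (negbTE (neq_bump _ _)).
Qed.
End RemAt.

Lemma rem_atC (T : Type) i j (s : seq T) : (i <= j)%N -> (j.+1 < size s)%N ->
  rem_at j (rem_at i s) = rem_at i (rem_at j.+1 s).
Proof.
case: s => // x0 s le_ij lt_js; apply: (@eq_from_nth _ x0) => [|k _].
  by rewrite !size_rem_at ?size_rem_at //; lia.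
rewrite !nth_rem_at bumpC /unbump /bump; congr nth; lia.
Qed.

Section Permute.
Variable V : zmodType.
Implicit Types s : seq V.

Definition permute m s (sigma : 'S_m) : seq V :=
  [seq nth 0 s (sigma i) | i <- enum 'I_m].

Lemma size_permute m s (sigma : 'S_m) : size (permute s sigma) = m.
Proof. by rewrite size_map size_enum_ord. Qed.

Lemma nth_map_ord m (F : 'I_m -> V) (i : 'I_m) : nth 0 [seq F j | j <- enum 'I_m] i = F i.
Proof. by rewrite (nth_map i) ?size_enum_ord // nth_ord_enum. Qed.

Lemma nth_permute m s (sigma : 'S_m) (i : 'I_m) :
  nth 0 (permute s sigma) i = nth 0 s (sigma i).
Proof. exact: nth_map_ord. Qed.

Lemma permuteM m s (sigma tau : 'S_m) :
  permute (permute s sigma) tau = permute s (tau * sigma).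
Proof. by apply: eq_map => i; rewrite nth_permute permM. Qed.

Lemma permute_lift_perm m s (i : 'I_m.+1) (tau : 'S_m) :
  permute s (lift_perm ord0 i tau) = nth 0 s i :: permute (rem_at i s) tau.
Proof.
rewrite /permute enum_ordSl /= lift_perm_id -map_comp; congr (_ :: _).
by apply: eq_map => k /=; rewrite lift_perm_lift nth_rem_at.
Qed.
End Permute.

Section PermTail.
Variable m : nat.
Implicit Type sigma : 'S_m.+1.

Definition perm_tail_fun sigma (k : 'I_m) : 'I_m :=
  odflt k (unlift (sigma ord0) (sigma (lift ord0 k))).

Lemma lift_perm_tail_fun sigma k :
  lift (sigma ord0) (perm_tail_fun sigma k) = sigma (lift ord0 k).
Proof.
rewrite /perm_tail_fun; have := neq_lift ord0 k.
by rewrite -(inj_eq (@perm_inj _ sigma)) => /unlift_some[k' -> ->].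
Qed.

Lemma perm_tail_fun_inj sigma : injective (perm_tail_fun sigma).
Proof.
move=> k k' /(congr1 (lift (sigma ord0))).
by rewrite !lift_perm_tail_fun => /perm_inj/lift_inj.
Qed.

Definition perm_tail sigma : 'S_m := perm (@perm_tail_fun_inj sigma).

Lemma perm_tailK sigma : lift_perm ord0 (sigma ord0) (perm_tail sigma) = sigma.
Proof.
apply/permP => k; case: (unliftP ord0 k) => [k'|] ->.
  by rewrite lift_perm_lift permE lift_perm_tail_fun.
by rewrite lift_perm_id.
Qed.

Lemma perm_tail_lift (i : 'I_m.+1) (tau : 'S_m) :
  perm_tail (lift_perm ord0 i tau) = tau.
Proof.
apply/permP => k; apply: (@lift_inj _ i).
by rewrite permE -{1}(lift_perm_id ord0 i tau) lift_perm_tail_fun lift_perm_lift.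
Qed.

Lemma sum_perm_lift (W : nmodType) (P : pred 'S_m.+1) (F : 'S_m.+1 -> W) :
  \sum_(sigma | P sigma) F sigma =
  \sum_(i < m.+1) \sum_(tau | P (lift_perm ord0 i tau)) F (lift_perm ord0 i tau).
Proof.
rewrite pair_big_dep /= (reindex (fun p => lift_perm ord0 p.1 p.2)) //.
exists (fun sigma => (sigma ord0, perm_tail sigma)) => [[i tau] _|sigma _] /=.
  by rewrite lift_perm_id perm_tail_lift.
exact: perm_tailK.
Qed.

Lemma sign_lift_perm (R : pzRingType) (i : 'I_m.+1) (tau : 'S_m) :
  (-1) ^+ lift_perm ord0 i tau = (-1) ^+ i * (-1) ^+ tau :> R.
Proof. by rewrite odd_lift_perm /= signr_addb signr_odd. Qed.
End PermTail.

Lemma ltn_lift n (h : 'I_n) (a b : 'I_n.-1) : (lift h a < lift h b)%N = (a < b)%N.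
Proof. by rewrite /= !ltnNge leq_bump2. Qed.

Lemma ltn_bump h i : (h < bump h i)%N = (h <= i)%N.
Proof. by rewrite leq_bump /unbump ltnSn subn1. Qed.

Lemma ltn_lift_self n (h : 'I_n) (a : 'I_n.-1) : (h < lift h a)%N = (h <= a)%N.
Proof. exact: ltn_bump. Qed.

Lemma increasing_perm_eq1 m (sigma : 'S_m) : {homo sigma : a b / (a < b)%N} -> sigma = 1%g.
Proof.
move=> sigma_incr; pose lt_ord := fun a b : 'I_m => (a < b)%N.
have sorted_enum : sorted lt_ord (enum 'I_m).
  by have := iota_ltn_sorted 0 m; rewrite -val_enum_ord sorted_map.
have : map sigma (enum 'I_m) = enum 'I_m.
  apply: (irr_sorted_eq (leT := lt_ord)) => //; first exact: ltn_trans.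
  - exact: ltnn.
  - exact: homo_sorted sorted_enum.
  move=> a; rewrite mem_enum; apply/mapP.
  by exists ((sigma^-1)%g a); rewrite ?mem_enum ?permKV.
move=> sigma_enum; apply/permP => a.
by rewrite perm1 -{2}(nth_ord_enum a a) -sigma_enum (nth_map a) ?nth_ord_enum ?size_enum_ord.
Qed.

Lemma unshuffleP m p (sigma : 'S_m) :
  reflect ((p <= m)%N /\ forall a b : 'I_m,
             (a < b)%N -> (b < p)%N || (p <= a)%N -> (sigma a < sigma b)%N)
          (unshuffle p sigma).
Proof.
apply: (iffP andP) => [[le_pm /forallP unsh]|[le_pm unsh]]; split=> //.
  by move=> a b lt_ab cond_ab; move: (unsh a) => /forallP/(_ b)/implyP; apply; rewrite lt_ab.
by apply/forallP => a; apply/forallP => b; apply/implyP => /andP[]; exact: unsh.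
Qed.

Lemma unshuffle0 m (sigma : 'S_m) : unshuffle 0 sigma = (sigma == 1%g).
Proof.
apply/unshuffleP/eqP => [[_ unsh]|->]; last by split=> // a b; rewrite !perm1.
by apply: increasing_perm_eq1 => a b lt_ab; apply: unsh; rewrite // orbT.
Qed.

Lemma unshuffle_lift_perm m p (i : 'I_m.+1) (tau : 'S_m) :
  unshuffle p.+1 (lift_perm ord0 i tau) =
  unshuffle p tau && [forall b : 'I_m, (b < p)%N ==> (i <= tau b)%N].
Proof.
apply/unshuffleP/andP => [[le_pm unsh]|[/unshuffleP[le_pm unsh] /forallP first_le]].
  split.
    apply/unshuffleP; split=> // a b lt_ab cond_ab.
    have := unsh (lift ord0 a) (lift ord0 b).
    by rewrite !lift_perm_lift !ltn_lift !lift0 !ltnS; apply.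
  apply/forallP => b; apply/implyP => lt_bp.
  have := unsh ord0 (lift ord0 b).
  by rewrite lift_perm_id lift_perm_lift !ltn_lift_self lift0 ltnS lt_bp; apply.
split=> // a b; case: (unliftP ord0 a) => [a'|] ->; case: (unliftP ord0 b) => [b'|] -> //=.
- by rewrite !lift_perm_lift ltn_lift /= !ltnS; apply: unsh.
- by rewrite lift_perm_id lift_perm_lift ltn_lift_self ltnS orbF => _; apply/implyP/first_le.
Qed.

Section UnshuffleSums.
Variable W : nmodType.

Lemma sum_unshuffle1 m (F : 'I_m.+1 -> W) :
  \sum_(sigma : 'S_m.+1 | unshuffle 1 sigma) F (sigma ord0) = \sum_(i < m.+1) F i.
Proof.
rewrite sum_perm_lift; apply: eq_bigr => i _.
rewrite (eq_bigl (pred1 1%g)) ?big_pred1_eq ?lift_perm_id // => tau.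
rewrite unshuffle_lift_perm unshuffle0 andbC.
by have -> : [forall b : 'I_m, (b < 0)%N ==> (i <= tau b)%N] by apply/forallP.
Qed.

Lemma sum_unshuffle2 m (F : 'I_m.+2 -> 'I_m.+2 -> W) :
  \sum_(sigma : 'S_m.+2 | unshuffle 2 sigma) F (sigma ord0) (sigma (lift ord0 ord0)) =
  \sum_(a < m.+2) \sum_(b < m.+2 | (a < b)%N) F a b.
Proof.
rewrite sum_perm_lift; apply: eq_bigr => a _.
under eq_bigl => tau.
  rewrite unshuffle_lift_perm.
  have -> : [forall b : 'I_m.+1, (b < 1)%N ==> (a <= tau b)%N] = (a <= tau ord0)%N.
    apply/forallP/idP => [/(_ ord0)//|le_a0 b]; apply/implyP => lt_b1.
    by rewrite (_ : b = ord0) //; apply: val_inj => /=; case: (nat_of_ord b) lt_b1.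
  over.
rewrite big_mkcondr /=.
under eq_bigr => tau _ do rewrite lift_perm_id lift_perm_lift.
rewrite (sum_unshuffle1 (fun c => if (a <= c)%N then F a (lift a c) else 0)).
rewrite [RHS]big_mkcond (bigD1_ord a) //= ltnn add0r.
by apply: eq_bigr => c _; rewrite ltn_bump.
Qed.

Lemma sum_lt_pairs_perm m (F : 'I_m -> 'I_m -> W) (rho : 'S_m) :
  (forall a b, F a b = F b a) ->
  \sum_(a < m) \sum_(b < m | (a < b)%N) F (rho a) (rho b) =
  \sum_(a < m) \sum_(b < m | (a < b)%N) F a b.
Proof.
move=> F_sym; rewrite !pair_big_dep /=.
(* Split the pairs according to whether rho^-1 keeps or reverses their order; the
   reversed ones are swapped back using the symmetry of F. *)
rewrite (reindex (fun p => ((rho^-1)%g p.1, (rho^-1)%g p.2))) /=; last first.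
  exists (fun p => (rho p.1, rho p.2)) => p _;
  by rewrite /= ?permKV ?permK -?surjective_pairing.
under eq_bigr do rewrite !permKV.
rewrite (bigID (fun p : 'I_m * 'I_m => (p.1 < p.2)%N)) /=.
rewrite [X in _ = X](bigID (fun p : 'I_m * 'I_m => ((rho^-1)%g p.1 < (rho^-1)%g p.2)%N)) /=.
congr (_ + _); first by apply: eq_bigl => p; rewrite andbC.
rewrite (reindex (fun p => (p.2, p.1))) /=; last by exists (fun p => (p.2, p.1)) => -[].
apply: eq_big => [[a b]|p _] /=; last exact: F_sym.
by have := inj_eq (@perm_inj _ (rho^-1)%g) a b; rewrite -!val_eqE /=; lia.
Qed.

Lemma sum_lt_pairs_ord1 (F : 'I_1 -> 'I_1 -> W) :
  \sum_(a < 1) \sum_(b < 1 | (a < b)%N) F a b = 0.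
Proof. by rewrite big_ord1 big_pred0 // => -[[]]. Qed.
End UnshuffleSums.

Lemma exists_perm_head2 m (a b : 'I_m.+2) : a != b ->
  exists sigma : 'S_m.+2, sigma ord0 = a /\ sigma (lift ord0 ord0) = b.
Proof.
case/unlift_some => c -> _; exists (lift_perm ord0 a (lift_perm ord0 c 1)).
by rewrite lift_perm_id lift_perm_lift lift_perm_id.
Qed.

Section LinearFun.
Variables (R : comPzRingType) (U V W : lmodType R).
Implicit Types (g : V -> W) (h : U -> V).

Lemma linear_funD h x y : linear h -> h (x + y) = h x + h y.
Proof. by move=> h_lin; rewrite -{1}[x]scale1r h_lin scale1r. Qed.

Lemma linear_funZ h c x : linear h -> h (c *: x) = c *: h x.
Proof. by move=> h_lin; apply: (scalable_linear h_lin). Qed.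

Lemma linear_funN h x : linear h -> h (- x) = - h x.
Proof. by move=> h_lin; rewrite -scaleN1r linear_funZ // scaleN1r. Qed.

Lemma linear_addf h1 h2 : linear h1 -> linear h2 -> linear (fun x => h1 x + h2 x).
Proof. by move=> h1_lin h2_lin a x y; rewrite h1_lin h2_lin scalerDr addrACA. Qed.

Lemma linear_scalef c h : linear h -> linear (fun x => c *: h x).
Proof. by move=> h_lin a x y; rewrite h_lin scalerDr !scalerA mulrC. Qed.

Lemma linear_sumf (I : Type) (r : seq I) (P : pred I) (F : I -> U -> V) :
  (forall i, P i -> linear (F i)) -> linear (fun x => \sum_(i <- r | P i) F i x).
Proof.
move=> F_lin a x y; rewrite scaler_sumr -big_split /=.
by apply: eq_bigr => i /F_lin ->.
Qed.

Lemma linear_comp g h : linear g -> linear h -> linear (fun x => g (h x)).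
Proof. by move=> g_lin h_lin a x y; rewrite h_lin g_lin. Qed.
End LinearFun.

Section SkewMaps.
Variables (K : fieldType) (L B : lmodType K).
Implicit Type hs : seq L -> B.

Lemma skew_permute n hs s (sigma : 'S_n) :
  Defs.skew n hs -> size s = n -> hs (permute s sigma) = (-1) ^+ sigma *: hs s.
Proof. by move=> h_skew size_s; apply: h_skew. Qed.

Lemma skew_cons n hs x : Defs.skew n.+1 hs -> Defs.skew n (fun v => hs (x :: v)).
Proof.
move=> h_skew v size_v tau; rewrite -/(permute v tau).
have := skew_permute (s := x :: v) (lift_perm ord0 ord0 tau) h_skew.
by rewrite permute_lift_perm rem_at0 sign_lift_perm expr0 mul1r /= size_v; apply.
Qed.

Lemma multilinear_cons n hs v :
  multilinear n.+1 hs -> size v = n -> linear (fun x => hs (x :: v)).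
Proof. by move=> h_lin size_v a x y; exact: (h_lin (0 :: v) (congr1 S size_v) 0). Qed.
End SkewMaps.

Lemma scale_sign_permM (R : pzRingType) (V : lmodType R) m (sigma tau : 'S_m) (x : V) :
  (-1) ^+ (sigma * tau)%g *: x = (-1) ^+ sigma *: ((-1) ^+ tau *: x).
Proof. by rewrite odd_permM signr_addb scalerA. Qed.

Lemma permuted_valsE (K : fieldType) (C L : lmodType K) m (sigma : 'S_m)
    (g : 'I_m -> {linear C -> L}) (t : seq C) :
  permuted_vals sigma g t = permute [seq g i (nth 0 t i) | i <- enum 'I_m] sigma.
Proof. by apply: eq_map => i; rewrite nth_map_ord. Qed.

Section ChevalleyEilenberg.
Variables (K : fieldType) (L B : lmodType K).
Variables (phi : L -> L -> L) (psi : L -> B -> B) (f : seq L -> B).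
Hypothesis phi_linear_l : forall z, linear (phi^~ z).
Hypothesis phi_linear_r : forall z, linear (phi z).
Hypothesis phi_alt : forall x, phi x x = 0.
Hypothesis psi_linear_l : forall b, linear (psi^~ b).
Hypothesis psi_linear_r : forall x, linear (psi x).

Lemma phi_antisym x y : phi y x = - phi x y.
Proof.
have phiDl u v z : phi (u + v) z = phi u z + phi v z.
  exact: (linear_funD u v (phi_linear_l z)).
have phiDr u v z : phi z (u + v) = phi z u + phi z v by exact: linear_funD.
have := phi_alt (x + y); rewrite phiDl !phiDr !phi_alt add0r addr0 => /eqP.
by rewrite addr_eq0 => /eqP ->; rewrite opprK.
Qed.

Definition psi_term (s : seq L) (i : nat) : B :=
  (-1) ^+ i *: psi (nth 0 s i) (f (rem_at i s)).

Definition phi_term (s : seq L) (j l : nat) : B :=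
  (-1) ^+ (j + l) *: f (phi (nth 0 s j) (nth 0 s l) :: rem_at j (rem_at l s)).

Lemma CE_dE s : CE_d phi psi f s =
  \sum_(i < size s) psi_term s i +
  \sum_(j < size s) \sum_(l < size s | (j < l)%N) phi_term s j l.
Proof. by []. Qed.

Lemma psi_term_permute n (s : seq L) (sigma : 'S_n.+1) :
  Defs.skew n f -> size s = n.+1 ->
  (-1) ^+ sigma *: psi (nth 0 (permute s sigma) 0) (f (drop 1 (permute s sigma))) =
  psi_term s (sigma ord0).
Proof.
move=> f_skew size_s.
rewrite -(perm_tailK sigma); move: (sigma ord0) (perm_tail sigma) => i tau.
rewrite permute_lift_perm lift_perm_id /= drop0 (skew_permute _ f_skew); last first.
  by rewrite size_rem_at size_s.
by rewrite linear_funZ // sign_lift_perm scalerA -mulrA -signr_addb addbb mulr1.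
Qed.

(* Here c indexes the second chosen entry inside rem_at a s, that is entry bump a c of s. *)
Lemma phi_term_bump n (s : seq L) (a c : nat) :
  multilinear n.+1 f -> size s = n.+2 -> (a < n.+2)%N -> (c < n.+1)%N ->
  (-1) ^+ (a + c) *: f (phi (nth 0 s a) (nth 0 s (bump a c)) :: rem_at c (rem_at a s)) =
  - phi_term s (minn a (bump a c)) (maxn a (bump a c)).
Proof.
move=> f_lin size_s lt_a lt_c; have size_R : size (rem_at c (rem_at a s)) = n.
  by rewrite !size_rem_at ?size_s // size_rem_at size_s.
rewrite /phi_term; case: (leqP a c) => [le_ac|lt_ca].
  have -> : bump a c = c.+1 by rewrite /bump le_ac.
  rewrite (minn_idPl (leqW le_ac)) (maxn_idPr (leqW le_ac)) rem_atC ?size_s //.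
  by rewrite addnS exprS mulN1r scaleNr opprK.
have -> : bump a c = c by rewrite /bump leqNgt lt_ca.
rewrite (minn_idPr (ltnW lt_ca)) (maxn_idPl (ltnW lt_ca)) addnC phi_antisym.
by rewrite (linear_funN _ (multilinear_cons f_lin size_R)) scalerN.
Qed.

Lemma phi_term_permute n (s : seq L) (sigma : 'S_n.+2) :
  Defs.skew n.+1 f -> multilinear n.+1 f -> size s = n.+2 ->
  phi_term s (minn (sigma ord0) (sigma (lift ord0 ord0)))
             (maxn (sigma ord0) (sigma (lift ord0 ord0))) =
  - ((-1) ^+ sigma *: f (phi (nth 0 (permute s sigma) 0) (nth 0 (permute s sigma) 1)
                           :: drop 2 (permute s sigma))).
Proof.
move=> f_skew f_lin size_s; apply/esym/eqP; rewrite eqr_oppLR; apply/eqP.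
rewrite -(perm_tailK sigma); move: (sigma ord0) (perm_tail sigma) => a tau.
rewrite -(perm_tailK tau); move: (tau ord0) (perm_tail tau) => c tau'.
rewrite !permute_lift_perm lift_perm_id lift_perm_lift lift_perm_id /= drop0.
rewrite nth_rem_at (skew_permute _ (skew_cons _ f_skew)); last first.
  by rewrite !size_rem_at ?size_s // size_rem_at size_s.
rewrite !sign_lift_perm !scalerA mulrA -mulrA -signr_addb addbb mulr1 -exprD.
exact: phi_term_bump f_lin size_s (ltn_ord a) (ltn_ord c).
Qed.

Lemma psi_term_twist n (s : seq L) (rho : 'S_n.+1) (i : 'I_n.+1) :
  Defs.skew n f -> size s = n.+1 ->
  psi_term (permute s rho) i = (-1) ^+ rho *: psi_term s (rho i).
Proof.
move=> f_skew size_s; pose rho_i : 'S_n.+1 := lift_perm ord0 i 1.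
have -> : rho i = (rho_i * rho)%g ord0 by rewrite permM lift_perm_id.
rewrite -{1}(lift_perm_id ord0 i 1%g) -!psi_term_permute ?size_permute // permuteM.
by rewrite scale_sign_permM !scalerA mulrAC -signr_addb addbb mul1r.
Qed.

Lemma phi_term_twist n (s : seq L) (rho : 'S_n.+2) (a b : 'I_n.+2) :
  Defs.skew n.+1 f -> multilinear n.+1 f -> size s = n.+2 -> (a < b)%N ->
  phi_term (permute s rho) a b =
  (-1) ^+ rho *: phi_term s (minn (rho a) (rho b)) (maxn (rho a) (rho b)).
Proof.
move=> f_skew f_lin size_s lt_ab.
have [sigma [sigma0 sigma1]] : exists sigma : 'S_n.+2,
    sigma ord0 = a /\ sigma (lift ord0 ord0) = b.
  by apply: exists_perm_head2; rewrite neq_ltn lt_ab.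
have -> : rho a = (sigma * rho)%g ord0 by rewrite permM sigma0.
have -> : rho b = (sigma * rho)%g (lift ord0 ord0) by rewrite permM sigma1.
rewrite -(minn_idPl (ltnW lt_ab)) -{2}(maxn_idPr (ltnW lt_ab)) -sigma0 -sigma1.
rewrite !phi_term_permute ?size_permute // permuteM scalerN; congr (- _).
by rewrite scale_sign_permM !scalerA mulrCA -signr_addb addbb mulr1.
Qed.

Lemma psi_sum_twist n (s : seq L) (rho : 'S_n.+1) :
  Defs.skew n f -> size s = n.+1 ->
  \sum_(i < n.+1) psi_term (permute s rho) i = (-1) ^+ rho *: \sum_(i < n.+1) psi_term s i.
Proof.
move=> f_skew size_s; under eq_bigr => i _ do rewrite psi_term_twist //.
by rewrite -scaler_sumr [in RHS](reindex_inj (@perm_inj _ rho)).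
Qed.

Lemma phi_sum_twist n (s : seq L) (rho : 'S_n.+1) :
  Defs.skew n f -> multilinear n f -> size s = n.+1 ->
  \sum_(j < n.+1) \sum_(l < n.+1 | (j < l)%N) phi_term (permute s rho) j l =
  (-1) ^+ rho *: \sum_(j < n.+1) \sum_(l < n.+1 | (j < l)%N) phi_term s j l.
Proof.
case: n rho => [|n] rho f_skew f_lin size_s.
  by rewrite !sum_lt_pairs_ord1 scaler0.
under eq_bigr => j _ do under eq_bigr => l lt_jl do rewrite phi_term_twist //.
under eq_bigr => j _ do rewrite -scaler_sumr.
rewrite -scaler_sumr (sum_lt_pairs_perm (F := fun a b => phi_term s (minn a b) (maxn a b))).
  by congr (_ *: _); apply: eq_bigr => j _; apply: eq_bigr => l /ltnW lt_jl;
     rewrite (minn_idPl lt_jl) (maxn_idPr lt_jl).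
by move=> a b; rewrite minnC maxnC.
Qed.

Lemma psi_sum_unshuffle n (s : seq L) :
  Defs.skew n f -> size s = n.+1 ->
  \sum_(i < n.+1) psi_term s i =
  \sum_(sigma : 'S_n.+1 | unshuffle 1 sigma)
     (-1) ^+ sigma *: psi (nth 0 (permute s sigma) 0) (f (drop 1 (permute s sigma))).
Proof.
move=> f_skew size_s; under [RHS]eq_bigr => sigma _ do rewrite psi_term_permute //.
by rewrite (sum_unshuffle1 (psi_term s)).
Qed.

Lemma phi_sum_unshuffle n (s : seq L) :
  Defs.skew n f -> multilinear n f -> size s = n.+1 ->
  \sum_(j < n.+1) \sum_(l < n.+1 | (j < l)%N) phi_term s j l =
  - \sum_(sigma : 'S_n.+1 | unshuffle 2 sigma)
       (-1) ^+ sigma *: f (phi (nth 0 (permute s sigma) 0) (nth 0 (permute s sigma) 1)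
                           :: drop 2 (permute s sigma)).
Proof.
case: n => [|n] f_skew f_lin size_s.
  by rewrite sum_lt_pairs_ord1 big_pred0 ?oppr0.
rewrite -sumrN; under [RHS]eq_bigr => sigma _ do rewrite -phi_term_permute //.
rewrite (sum_unshuffle2 (fun a b => phi_term s (minn a b) (maxn a b))).
by apply: eq_bigr => j _; apply: eq_bigr => l /ltnW lt_jl;
   rewrite (minn_idPl lt_jl) (maxn_idPr lt_jl).
Qed.

Lemma CE_d_unshuffle n (s : seq L) :
  Defs.skew n f -> multilinear n f -> size s = n.+1 ->
  CE_d phi psi f s =
  \sum_(sigma : 'S_n.+1 | unshuffle 1 sigma)
     (-1) ^+ sigma *: psi (nth 0 (permute s sigma) 0) (f (drop 1 (permute s sigma))) -
  \sum_(sigma : 'S_n.+1 | unshuffle 2 sigma)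
     (-1) ^+ sigma *: f (phi (nth 0 (permute s sigma) 0) (nth 0 (permute s sigma) 1)
                         :: drop 2 (permute s sigma)).
Proof.
move=> f_skew f_lin size_s.
by rewrite CE_dE size_s psi_sum_unshuffle // phi_sum_unshuffle.
Qed.

Lemma CE_d_skew n : Defs.skew n f -> multilinear n f -> Defs.skew n.+1 (CE_d phi psi f).
Proof.
move=> f_skew f_lin s size_s rho; rewrite -/(permute s rho).
by rewrite !CE_dE size_permute size_s psi_sum_twist // phi_sum_twist // scalerDr.
Qed.

Lemma psi_term_linear n (s : seq L) p i :
  multilinear n f -> size s = n.+1 -> (p < n.+1)%N -> (i < n.+1)%N ->
  linear (fun v => psi_term (set_nth 0 s p v) i).
Proof.
move=> f_lin size_s lt_p lt_i a x y; rewrite /psi_term !nth_set_nth /=.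
case: (eqVneq i p) => [->|neq_ip].
  rewrite !rem_at_set_nth_id ?size_s //.
  exact: (linear_scalef _ (psi_linear_l _) a x y).
rewrite !rem_at_set_nth ?size_s //.
have size_R : size (rem_at i s) = n by rewrite size_rem_at size_s.
have lt_p' : (unbump i p < n)%N by rewrite /unbump; move: neq_ip; lia.
exact: (linear_scalef _ (linear_comp (psi_linear_r _) (f_lin _ size_R _ lt_p')) a x y).
Qed.

Lemma phi_term_linear n (s : seq L) p j l :
  multilinear n f -> size s = n.+1 -> (p < n.+1)%N -> (j < l)%N -> (l < n.+1)%N ->
  linear (fun v => phi_term (set_nth 0 s p v) j l).
Proof.
case: n => [|n] f_lin size_s lt_p lt_jl lt_l a x y; first by move: lt_jl lt_l; lia.
have size_Rl : size (rem_at l s) = n.+1 by rewrite size_rem_at size_s.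
have lt_j : (j < n.+1)%N by lia.
have size_R : size (rem_at j (rem_at l s)) = n by rewrite size_rem_at size_Rl.
have f_cons_lin := multilinear_cons f_lin size_R.
rewrite /phi_term !nth_set_nth /=.
case: (eqVneq l p) => [<-|neq_lp].
  rewrite (ltn_eqF lt_jl) !rem_at_set_nth_id ?size_s //.
  exact: (linear_scalef _ (linear_comp f_cons_lin (phi_linear_r _)) a x y).
rewrite !(@rem_at_set_nth _ 0 l) ?size_s //.
case: (eqVneq j p) => [<-|neq_jp].
  have -> : unbump l j = j by rewrite /unbump; case: ltnP => [|_]; [lia | exact: subn0].
  rewrite !rem_at_set_nth_id ?size_Rl //.
  exact: (linear_scalef _ (linear_comp f_cons_lin (phi_linear_l _)) a x y).
have [lt_p' neq_jp'] : (unbump l p < n.+1)%N /\ j != unbump l p.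
  by rewrite /unbump; move: neq_lp neq_jp; case: ltnP; lia.
rewrite !(@rem_at_set_nth _ 0 j) ?size_Rl //.
have lt_q : ((unbump j (unbump l p)).+1 < n.+1)%N.
  by rewrite /unbump; move: neq_jp'; case: ltnP; lia.
have size_phiR : size (phi (nth 0 s j) (nth 0 s l) :: rem_at j (rem_at l s)) = n.+1.
  by rewrite /= size_R.
exact: (linear_scalef _ (f_lin _ size_phiR _ lt_q) a x y).
Qed.

Lemma CE_d_multilinear n : multilinear n f -> multilinear n.+1 (CE_d phi psi f).
Proof.
move=> f_lin s size_s p lt_p.
have size_set v : size (set_nth 0 s p v) = n.+1.
  by rewrite size_set_nth size_s (maxn_idPr lt_p).
suff CE_lin : linear (fun v =>
    \sum_(i < n.+1) psi_term (set_nth 0 s p v) i +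
    \sum_(j < n.+1) \sum_(l < n.+1 | (j < l)%N) phi_term (set_nth 0 s p v) j l).
  by move=> a x y; rewrite !CE_dE !size_set; exact: CE_lin.
apply: linear_addf; apply: linear_sumf => j _.
  exact: psi_term_linear f_lin size_s lt_p (ltn_ord j).
by apply: linear_sumf => l lt_jl; exact: phi_term_linear f_lin size_s lt_p lt_jl (ltn_ord l).
Qed.

Variables (C : lmodType K) (cop : C -> seq (C * C)).

Lemma deltaF_induced n :
  Defs.skew n f -> multilinear n f ->
  induced_by cop (CE_d phi psi f) (deltaF phi psi cop (m := n.+1) f).
Proof.
move=> f_skew f_lin g c; rewrite /deltaF /induced /=.
have size_vals t : size [seq g i (nth 0 t i) | i <- enum 'I_n.+1] = n.+1.
  by rewrite size_map size_enum_ord.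
under eq_bigr => t _ do rewrite (CE_d_unshuffle f_skew f_lin (size_vals t)).
rewrite sumrB; congr (_ - _); rewrite [RHS]exchange_big /=; apply: eq_bigr => sigma _;
  by rewrite scaler_sumr; apply: eq_bigr => t _; rewrite permuted_valsE.
Qed.

Lemma deltaF_TD_skew n :
  Defs.skew n f -> multilinear n f ->
  TD_skew cop (CE_d phi psi f) (deltaF phi psi cop (m := n.+1) f).
Proof.
move=> f_skew f_lin; split=> [|sigma g c]; first exact: deltaF_induced.
rewrite deltaF_induced // /induced /twisted scaler_sumr; apply: eq_bigr => t _ /=.
set u := [seq g i (nth 0 t ((sigma^-1)%g i)) | i <- enum 'I_n.+1].
have -> : [seq g (sigma i) (nth 0 t i) | i <- enum 'I_n.+1] = permute u sigma.
  by apply: eq_map => i; rewrite nth_map_ord permK.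
by rewrite (skew_permute _ (CE_d_skew f_skew f_lin)) // size_map size_enum_ord.
Qed.
End ChevalleyEilenberg.

Theorem proposition6 (k : fieldType) (C L B : lmodType k)
    (cop : C -> seq (C * C)) (phi : L -> L -> L) (psi : L -> B -> B)
    (n : nat) (f : seq L -> B) :
  coalgebra cop -> lie_algebra phi -> lie_module phi psi -> Alt n f ->
  @induced_by k L B C cop n.+1 (CE_d phi psi f) (@deltaF k L B phi psi C cop n.+1 f) /\
  Alt n.+1 (CE_d phi psi f) /\
  @TD_skew k L B C cop n.+1 (CE_d phi psi f) (@deltaF k L B phi psi C cop n.+1 f).
Proof.
move=> _ [phi_l [phi_r [phi_alt _]]] [psi_l [psi_r _]] [f_lin f_skew].
have phi_linear_l z : linear (phi^~ z) by move=> a x y; exact: phi_l.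
have phi_linear_r z : linear (phi z) by move=> a x y; exact: phi_r.
have psi_linear_l b : linear (psi^~ b) by move=> a x y; exact: psi_l.
have psi_linear_r x : linear (psi x) by move=> a b b'; exact: psi_r.
split; first exact: deltaF_induced.
split; last exact: deltaF_TD_skew.
by split; [exact: CE_d_multilinear | exact: CE_d_skew].
Qed.
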